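(* Let $\beta>2\alpha>0$ with $\beta+2\alpha\le1$, and let $\varphi_N(x)=\frac12x^TAx-\sum_{k=1}^{s_N}\log\cosh(x^TAe_k)$ for $x\in\mathbb{R}^{s_N}$. Then $\varphi_N$ takes its global minimum at $x=(0,\dots,0)$.
   Context: $A$ is the $s_N\times s_N$ symmetric circulant matrix $A=\beta I+\alpha(P+P^T)$, where $P$ is the cyclic shift matrix (so $A_{kk}=\beta$, $A_{k,k\pm1}=\alpha$ with indices mod $s_N$); $e_k$ are the standard basis vectors of $\mathbb{R}^{s_N}$. *)

From Stdlib Require Import Reals.
From mathcomp Require Import all_boot all_order all_algebra.
From mathcomp Require Import Rstruct.
Set Implicit Arguments. Unset Strict Implicit. Unset Printing Implicit Defensive.
Import GRing.Theory Num.Theory.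
Local Open Scope ring_scope.

Definition shiftP (n : nat) : 'M[R]_n := \matrix_(i, j) (i == ordS j)%:R.

Definition Amat (n : nat) (alpha beta : R) : 'M[R]_n :=
  beta%:M + alpha *: (shiftP n + (shiftP n)^T).

Definition e_vec (n : nat) (k : 'I_n) : 'cV[R]_n := delta_mx k 0.

Definition phiN (n : nat) (alpha beta : R) (x : 'cV[R]_n) : R :=
  (1 / 2) * (x^T *m Amat n alpha beta *m x) 0 0
  - \sum_(k < n) ln (cosh ((x^T *m Amat n alpha beta *m e_vec k) 0 0)).

(* Since ln (cosh t) <= t^2 / 2, phiN x >= (x^T A x - |A x|^2) / 2 = x^T A (I - A) x / 2.
   With P orthogonal, A (I - A) is a nonnegative combination of Gram matrices:
     4 A (I - A) = 4 alpha^2 (I - P^2)(I - P^2)^T + l+ (1 - l+) (I + P)(I + P)^T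
                   + l- (1 - l-) (I - P)(I - P)^T,
   where l+- = beta +- 2 alpha are the extreme eigenvalues of A; the hypotheses put both
   in [0, 1], so the quadratic form is nonnegative while phiN 0 = 0. *)
From Stdlib Require Import Reals Lra.
From Coquelicot Require Import Coquelicot.
From mathcomp Require Import all_boot all_order all_algebra Rstruct.

Set Implicit Arguments. Unset Strict Implicit. Unset Printing Implicit Defensive.

Section LogCosh.
Local Open Scope R_scope.

Lemma le_of_derive_ge0 (f df : R -> R) :
  (forall t, is_derive f t (df t)) -> (forall t, 0 <= t -> 0 <= df t) ->
  forall y, 0 <= y -> f 0 <= f y.
Proof.
move=> f_df df_ge0 y y_ge0.
have f_cont t : continuity_pt f t.
  by apply/continuity_pt_filterlim/(ex_derive_continuous f); exists (df t).
have [c [c_in f_mvt]] := MVT_gen f 0 y df (fun t _ => f_df t) (fun t _ => f_cont t).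
rewrite Rmin_left // Rmax_right // in c_in.
have : 0 <= df c * (y - 0) by apply: Rmult_le_pos; [apply: df_ge0 | ]; lra.
lra.
Qed.

Lemma cosh_pos t : 0 < cosh t.
Proof. by rewrite /cosh; have := exp_pos t; have := exp_pos (- t); lra. Qed.

Lemma cosh_opp t : cosh (- t) = cosh t.
Proof. by rewrite /cosh Ropp_involutive; lra. Qed.

Lemma sinh_ge0 t : 0 <= t -> 0 <= sinh t.
Proof.
case=> [t_gt0|<-]; last by rewrite sinh_0; lra.
by rewrite -sinh_0; left; apply: sinh_lt.
Qed.

Lemma sinh_le_mul_cosh t : 0 <= t -> sinh t <= t * cosh t.
Proof.
have k_deriv s : is_derive (fun s => s * cosh s - sinh s) s (s * sinh s).
  by rewrite /cosh /sinh; auto_derive; [|field].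
move=> t_ge0; have := le_of_derive_ge0 k_deriv
  (fun s s_ge0 => Rmult_le_pos _ _ s_ge0 (sinh_ge0 s_ge0)) t_ge0.
by rewrite sinh_0; lra.
Qed.

Lemma ln_cosh_le t : ln (cosh t) <= t * t / 2.
Proof.
pose g s := s * s / 2 - ln (cosh s).
have g_deriv s : is_derive g s ((s * cosh s - sinh s) / cosh s).
  have := cosh_pos s; rewrite /g /cosh /sinh => ?.
  by auto_derive; [lra | field; lra].
have g_mono s : 0 <= s -> g 0 <= g s.
  apply: (le_of_derive_ge0 g_deriv) => {}s s_ge0.
  apply: Rdiv_le_0_compat; last exact: cosh_pos.
  by have := sinh_le_mul_cosh s_ge0; lra.
have g0 : g 0 = 0 by rewrite /g cosh_0 ln_1; lra.
have [t_ge0|t_lt0] := Rle_or_lt 0 t.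
  by have := g_mono t t_ge0; rewrite g0 /g; lra.
by have := g_mono (- t) ltac:(lra); rewrite g0 /g cosh_opp; lra.
Qed.

End LogCosh.

From mathcomp Require Import ring lra.
Import GRing.Theory Num.Theory.
Local Open Scope ring_scope.

Lemma sumr_sub_inj (V : zmodType) (I : finType) (s : I -> I) (F : I -> V) :
  injective s -> \sum_i (F (s i) - F i) = 0.
Proof. by move=> s_inj; rewrite sumrB [X in _ - X](reindex_inj s_inj) subrr. Qed.

Section TridiagonalCirculant.
Variables (K : comPzRingType) (n : nat) (alpha beta : K).

Definition tridiag_circ (u : 'I_n -> K) (k : 'I_n) : K :=
  beta * u k + alpha * (u (ordS k) + u (ord_pred k)).

Lemma tridiag_circ_sos (u : 'I_n -> K) :
  let y := tridiag_circ u in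
  4 * (\sum_k y k * u k - \sum_k y k ^+ 2) =
    4 * alpha ^+ 2 * \sum_k (u (ordS k) - u (ord_pred k)) ^+ 2
    + (beta + 2 * alpha) * (1 - (beta + 2 * alpha)) * \sum_k (u k + u (ordS k)) ^+ 2
    + (beta - 2 * alpha) * (1 - (beta - 2 * alpha)) * \sum_k (u k - u (ordS k)) ^+ 2.
Proof.
move=> y; apply/subr0_eq; rewrite mulrBr !mulr_sumr -!big_split -!sumrB /=.
pose sq k := u k ^+ 2; pose adj k := u k * u (ordS k).
(* Summandwise, the two sides differ by cyclic differences F (s k) - F k, whose sums vanish. *)
rewrite (eq_bigr (fun k =>
    - 8 * alpha ^+ 2 * (sq (ord_pred k) - sq k)
    + 2 * (beta ^+ 2 - beta) * (sq (ordS k) - sq k)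
    + 4 * alpha * (1 - 2 * beta) * (adj (ord_pred k) - adj k))); last first.
  by move=> k _; rewrite /sq /adj /y /tridiag_circ ord_predK; ring.
have [pred_inj S_inj] := (@ord_pred_inj n, @ordS_inj n).
by rewrite !big_split /= -!mulr_sumr !sumr_sub_inj ?mulr0 ?addr0.
Qed.

End TridiagonalCirculant.

Lemma tridiag_circ_form_ge (K : realDomainType) n (alpha beta : K) (u : 'I_n -> K) :
  0 <= (beta + 2 * alpha) * (1 - (beta + 2 * alpha)) ->
  0 <= (beta - 2 * alpha) * (1 - (beta - 2 * alpha)) ->
  \sum_k tridiag_circ alpha beta u k ^+ 2 <= \sum_k tridiag_circ alpha beta u k * u k.
Proof.
move=> eig_max eig_min; rewrite -subr_ge0 -(pmulr_rge0 _ (ltr0Sn K 3)) tridiag_circ_sos.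
have sum_sqr_ge0 (F : 'I_n -> K) : 0 <= \sum_k F k ^+ 2.
  by apply: sumr_ge0 => k _; apply: sqr_ge0.
by rewrite !addr_ge0 ?(mulr_ge0 _ (sum_sqr_ge0 _)) // mulr_ge0 ?sqr_ge0.
Qed.

Lemma mulmx_shiftP m n (B : 'M[R]_(m, n)) i k : (B *m shiftP n) i k = B i (ordS k).
Proof.
rewrite mxE (bigD1 (ordS k)) //= mxE eqxx mulr1 big1 ?addr0 // => j /negPf j_neq.
by rewrite mxE j_neq mulr0.
Qed.

Lemma mulmx_tr_shiftP m n (B : 'M[R]_(m, n)) i k :
  (B *m (shiftP n)^T) i k = B i (ord_pred k).
Proof.
rewrite mxE (bigD1 (ord_pred k)) //= !mxE ord_predK eqxx mulr1 big1 ?addr0 // => j j_neq.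
rewrite !mxE; case: eqP => [k_Sj|]; last by rewrite mulr0.
by move: j_neq; rewrite k_Sj ordSK eqxx.
Qed.

Lemma trmx_mul_Amat n alpha beta (x : 'cV[R]_n) k :
  (x^T *m Amat n alpha beta) 0 k = tridiag_circ alpha beta (x^~ 0) k.
Proof.
rewrite /Amat mulmxDr mul_mx_scalar -scalemxAr mulmxDr.
rewrite mxE [X in _ + X]mxE [X in _ * X]mxE mulmx_shiftP mulmx_tr_shiftP.
by rewrite !mxE.
Qed.

Lemma phiN_tridiag_circ n alpha beta (x : 'cV[R]_n) :
  phiN alpha beta x = 1 / 2 * \sum_k tridiag_circ alpha beta (x^~ 0) k * x k 0
                      - \sum_k ln (cosh (tridiag_circ alpha beta (x^~ 0) k)).
Proof.
rewrite /phiN mxE; congr (_ * _ - _); apply: eq_bigr => k _.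
  by rewrite trmx_mul_Amat.
by rewrite /e_vec -colE mxE trmx_mul_Amat.
Qed.

Lemma phiN0 n alpha beta : phiN alpha beta (0 : 'cV[R]_n) = 0.
Proof.
have tridiag0 k : tridiag_circ alpha beta ((0 : 'cV[R]_n)^~ 0) k = 0.
  by rewrite /tridiag_circ !mxE !(mulr0, addr0).
rewrite phiN_tridiag_circ !big1 => [|k _|k _]; last by rewrite tridiag0 mxE mulr0.
  by rewrite mulr0 subr0.
by rewrite tridiag0 cosh_0 ln_1.
Qed.

Theorem lemma4p3 (n : nat) (alpha beta : R) :
  0 < alpha -> 2 * alpha < beta -> beta + 2 * alpha <= 1 ->
  forall x : 'cV[R]_n, phiN alpha beta (0 : 'cV[R]_n) <= phiN alpha beta x.
Proof.
move=> alpha_gt0 lt_2alpha_beta le_beta_1 x.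
have eig_max : 0 <= (beta + 2 * alpha) * (1 - (beta + 2 * alpha)).
  by apply: mulr_ge0; lra.
have eig_min : 0 <= (beta - 2 * alpha) * (1 - (beta - 2 * alpha)).
  by apply: mulr_ge0; lra.
have := tridiag_circ_form_ge (x^~ 0) eig_max eig_min.
rewrite phiN0 phiN_tridiag_circ; set y := tridiag_circ alpha beta (x^~ 0).
have ln_cosh_y k : ln (cosh (y k)) <= y k ^+ 2 / 2.
  by have /RleP := ln_cosh_le (y k); rewrite RdivE RmultE expr2.
have : \sum_k ln (cosh (y k)) <= \sum_k y k ^+ 2 / 2.
  by apply: ler_sum => k _; apply: ln_cosh_y.
rewrite -mulr_suml; lra.
Qed.
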